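(* Let $\mathcal N=\mathbb N$ or $\mathcal N=\{1,\dots,n\}$ with $n\ge2$, and let $\mathbf c=(c_i)_{i\in\mathcal N}$ be real numbers with $\inf_{i\in\mathcal N}c_i>0$. Let $\mathcal P$ be the set of sequences $\mathbf p=(p_i)_{i\in\mathcal N}$ with $p_i\ge0$, $\sum_i p_i=1$, $\sum_i p_ic_i<\infty$, and for $\mathbf p\in\mathcal P$ let $$H(\mathbf p)=-\Big(\sum_{i\in\mathcal N}p_i\log p_i\Big)\Big(\sum_{i\in\mathcal N}p_ic_i\Big)^{-1}\in[0,+\infty]$$ (with $0\log0=0$). If $\mathbf p\in\mathcal P$ satisfies $p_k=0$ for some $k\in\mathcal N$, then there exists $\mathbf p'\in\mathcal P$ with $p'_i>0$ for all $i\in\mathcal N$ such that $H(\mathbf p')\ge H(\mathbf p)$, and the inequality is strict when $H(\mathbf p)<\infty$. *)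

From Stdlib Require Import Reals.
From Coquelicot Require Export Coquelicot.
Open Scope R_scope.

(* Index set: [None] encodes N = the natural numbers {0,1,2,...};
   [Some n] encodes the finite set {0,...,n-1} (n elements; the paper's
   {1,...,n} shifted by one). *)
Definition inN (N : option nat) (i : nat) : Prop :=
  match N with None => True | Some n => (i < n)%nat end.

Definition mask (N : option nat) (f : nat -> R) (i : nat) : R :=
  match N with None => f i | Some n => if Nat.ltb i n then f i else 0 end.

Definition xlogx (x : R) : R := if Req_EM_T x 0 then 0 else x * ln x.

Definition inP (N : option nat) (c p : nat -> R) : Prop :=
  (forall i, inN N i -> 0 <= p i) /\
  is_series (mask N p) 1 /\
  ex_series (mask N (fun i => p i * c i)).

(* entropy -sum p_i log p_i, as an extended real in [0, +oo]
   (limit of the partial sums of a series of nonnegative terms) *)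
Definition entropy (N : option nat) (p : nat -> R) : Rbar :=
  Lim_seq (fun m => sum_n (mask N (fun i => - xlogx (p i))) m).

Definition cost (N : option nat) (c p : nat -> R) : R :=
  Series (mask N (fun i => p i * c i)).

Definition Hrate (N : option nat) (c p : nat -> R) : Rbar :=
  Rbar_mult (entropy N p) (Finite (/ cost N c p)).

From Stdlib Require Import Reals Lra.
From Coquelicot Require Import Coquelicot.
Open Scope R_scope.

(* Mix p with a fully supported q in P: p_t = (1 - t) p + t q. The cost of
   p_t is affine in t, and by concavity of -x log x each entropy term of p_t
   is at least (1 - t) times the corresponding term of p; at the index k
   where p vanishes, p_t gains the extra term t q_k log (1 / (t q_k)). This
   gain is of order t log (1/t), which beats the O(t) change of the cost as
   t -> 0, so H strictly increases for small t. If the entropy of p is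
   infinite, so is that of p_t. *)

Lemma inN_dec N i : {inN N i} + {~ inN N i}.
Proof. destruct N as [n|]; simpl; [apply Compare_dec.lt_dec | left; exact I]. Qed.

Lemma mask_in N f i : inN N i -> mask N f i = f i.
Proof.
  destruct N as [n|]; simpl; auto.
  intros Hi; now rewrite (proj2 (Nat.ltb_lt i n) Hi).
Qed.

Lemma mask_out N f i : ~ inN N i -> mask N f i = 0.
Proof.
  destruct N as [n|]; simpl; [|tauto].
  intros Hi; now rewrite (proj2 (Nat.ltb_nlt i n) Hi).
Qed.

Lemma mask_ext N f g i : (inN N i -> f i = g i) -> mask N f i = mask N g i.
Proof.
  intros Hfg; destruct (inN_dec N i) as [Hi|Hi];
    [rewrite !mask_in | rewrite !mask_out]; auto.
Qed.

Lemma mask_nonneg N f i : (forall j, inN N j -> 0 <= f j) -> 0 <= mask N f i.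
Proof.
  intros Hf; destruct (inN_dec N i) as [Hi|Hi];
    [rewrite mask_in | rewrite mask_out]; auto; lra.
Qed.

Lemma mask_lin N a b f g i :
  mask N (fun j => a * f j + b * g j) i = a * mask N f i + b * mask N g i.
Proof. destruct (inN_dec N i) as [Hi|Hi]; [rewrite !mask_in | rewrite !mask_out]; auto; ring. Qed.

Lemma mask_scal_r N f a i : mask N (fun j => f j * a) i = mask N f i * a.
Proof. destruct (inN_dec N i) as [Hi|Hi]; [rewrite !mask_in | rewrite !mask_out]; auto; ring. Qed.

Lemma sum_n_nonneg (a : nat -> R) m : (forall i, 0 <= a i) -> 0 <= sum_n a m.
Proof. intros Ha; rewrite sum_n_Reals; now apply cond_pos_sum. Qed.

Lemma sum_n_le_S (a : nat -> R) m : (forall i, 0 <= a i) -> sum_n a m <= sum_n a (S m).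
Proof. intros Ha; rewrite sum_Sn; specialize (Ha (S m)); unfold plus; simpl; lra. Qed.

Lemma sum_n_ge_term (a : nat -> R) k m :
  (forall i, 0 <= a i) -> (k <= m)%nat -> a k <= sum_n a m.
Proof.
  intros Ha Hkm; induction Hkm as [|m _ IH].
  - destruct k as [|k]; [rewrite sum_O; lra|].
    rewrite sum_Sn; pose proof (sum_n_nonneg a k Ha); unfold plus; simpl; lra.
  - pose proof (sum_n_le_S a m Ha); lra.
Qed.

Lemma is_series_ge_term (a : nat -> R) l n :
  (forall i, 0 <= a i) -> is_series a l -> a n <= l.
Proof.
  intros Ha Hl.
  pose proof (is_lim_seq_incr_compare (sum_n a) l Hl (fun m => sum_n_le_S a m Ha) n).
  pose proof (sum_n_ge_term a n n Ha (le_n n)); lra.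
Qed.

Lemma ex_series_nonneg_le (a b : nat -> R) :
  (forall n, 0 <= a n <= b n) -> ex_series b -> ex_series a.
Proof.
  intros Hab Hb; apply (ex_series_le a b); auto; intros n.
  specialize (Hab n); unfold norm; simpl; unfold abs; simpl.
  rewrite Rabs_pos_eq; lra.
Qed.

Lemma sum_n_scal_plus_le (u v : nat -> R) s A k m :
  (forall i, s * u i <= v i) -> s * u k + A <= v k -> (k <= m)%nat ->
  s * sum_n u m + A <= sum_n v m.
Proof.
  intros Huv Hk Hkm.
  set (d i := v i - s * u i).
  assert (Hv : sum_n v m = s * sum_n u m + sum_n d m).
  { rewrite <- (sum_n_mult_l (K := R_Ring)), <- (sum_n_plus (G := R_AbelianMonoid)).
    apply sum_n_ext; intros i; unfold d, plus, mult; simpl; ring. }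
  assert (Hd : forall i, 0 <= d i) by (intros i; specialize (Huv i); unfold d; lra).
  pose proof (sum_n_ge_term d k m Hd Hkm).
  unfold d in *; lra.
Qed.

Lemma Lim_seq_sum_n_scal_plus_le (u v : nat -> R) s A k :
  (forall i, 0 <= u i) -> (forall i, s * u i <= v i) -> s * u k + A <= v k ->
  Rbar_le (Rbar_plus (Rbar_mult s (Lim_seq (sum_n u))) A) (Lim_seq (sum_n v)).
Proof.
  intros Hu Huv Hk.
  assert (Hlim : Lim_seq (fun m => s * sum_n u m + A)
                 = Rbar_plus (Rbar_mult s (Lim_seq (sum_n u))) A).
  { rewrite Lim_seq_plus, Lim_seq_scal_l, Lim_seq_const; auto.
    - apply ex_lim_seq_scal_l, ex_lim_seq_incr; intros m; now apply sum_n_le_S.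
    - apply ex_lim_seq_const.
    - rewrite Lim_seq_scal_l, Lim_seq_const. now destruct (Rbar_mult _ _). }
  rewrite <- Hlim; apply Lim_seq_le_loc.
  exists k; intros m Hm; now apply (sum_n_scal_plus_le u v s A k).
Qed.

Lemma xlogx_0 : xlogx 0 = 0.
Proof. unfold xlogx; destruct (Req_EM_T 0 0); lra. Qed.

Lemma xlogx_pos x : 0 < x -> xlogx x = x * ln x.
Proof. intros Hx; unfold xlogx; destruct (Req_EM_T x 0); [lra | auto]. Qed.

Lemma xlogx_nonpos x : 0 <= x <= 1 -> xlogx x <= 0.
Proof.
  intros Hx; destruct (Req_dec x 0) as [->|Hx0]; [rewrite xlogx_0; lra|].
  rewrite xlogx_pos by lra.
  assert (ln x <= 0) by (rewrite <- ln_1; apply ln_le; lra).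
  nra.
Qed.

Lemma xlogx_ge_tangent a m : 0 <= a -> 0 < m -> a * ln m + a - m <= xlogx a.
Proof.
  intros Ha Hm; destruct (Req_dec a 0) as [->|Ha0]; [rewrite xlogx_0; lra|].
  rewrite xlogx_pos by lra.
  pose proof (exp_ineq1_le (ln (m / a))) as Hexp.
  rewrite exp_ln, ln_div in Hexp by (try apply Rdiv_lt_0_compat; lra).
  assert (a * (1 + (ln m - ln a)) <= a * (m / a)) by (apply Rmult_le_compat_l; lra).
  replace (a * (m / a)) with m in * by (field; lra).
  nra.
Qed.

Lemma xlogx_convex t a b : 0 <= t <= 1 -> 0 <= a -> 0 <= b -> 0 < (1 - t) * a + t * b ->
  xlogx ((1 - t) * a + t * b) <= (1 - t) * xlogx a + t * xlogx b.
Proof.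
  intros Ht Ha Hb Hm; set (m := (1 - t) * a + t * b) in *.
  pose proof (xlogx_ge_tangent a m Ha Hm); pose proof (xlogx_ge_tangent b m Hb Hm).
  rewrite xlogx_pos by exact Hm.
  assert ((1 - t) * (a * ln m + a - m) <= (1 - t) * xlogx a) by (apply Rmult_le_compat_l; lra).
  assert (t * (b * ln m + b - m) <= t * xlogx b) by (apply Rmult_le_compat_l; lra).
  assert ((1 - t) * (a * ln m + a - m) + t * (b * ln m + b - m) = m * ln m) by (unfold m; ring).
  lra.
Qed.

Lemma neg_xlogx_mix_ge t a b : 0 < t < 1 -> 0 <= a -> 0 < b <= 1 ->
  (1 - t) * - xlogx a <= - xlogx ((1 - t) * a + t * b).
Proof.
  intros Ht Ha Hb.
  pose proof (xlogx_nonpos b ltac:(lra)).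
  assert (Hmix : 0 < (1 - t) * a + t * b) by nra.
  pose proof (xlogx_convex t a b ltac:(lra) Ha ltac:(lra) Hmix).
  nra.
Qed.

Definition mix (t : R) (p q : nat -> R) (i : nat) : R := (1 - t) * p i + t * q i.

Lemma inP_le1 N c p i : inP N c p -> inN N i -> p i <= 1.
Proof.
  intros [Hp0 [Hp1 _]] Hi.
  pose proof (is_series_ge_term _ _ i (fun j => mask_nonneg N p j Hp0) Hp1) as Hpi.
  now rewrite mask_in in Hpi.
Qed.

Lemma is_series_mask_mix N t f g a b :
  is_series (mask N f) a -> is_series (mask N g) b ->
  is_series (mask N (mix t f g)) ((1 - t) * a + t * b).
Proof.
  intros Hf Hg.
  apply (is_series_ext _ _ _ (fun i => eq_sym (mask_lin N (1 - t) t f g i))).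
  exact (is_series_plus _ _ _ _ (is_series_scal_l (1 - t) _ _ Hf) (is_series_scal_l t _ _ Hg)).
Qed.

Lemma is_series_cost_mix N c p q t : inP N c p -> inP N c q ->
  is_series (mask N (fun i => mix t p q i * c i)) ((1 - t) * cost N c p + t * cost N c q).
Proof.
  intros (_ & _ & Hpc) (_ & _ & Hqc).
  apply (is_series_ext (mask N (mix t (fun i => p i * c i) (fun i => q i * c i)))).
  { intros i; apply mask_ext; intros _; unfold mix; ring. }
  apply is_series_mask_mix; now apply Series_correct.
Qed.

Lemma inP_mix N c p q t : 0 <= t <= 1 -> inP N c p -> inP N c q -> inP N c (mix t p q).
Proof.
  intros Ht Hp Hq; pose proof (is_series_cost_mix N c p q t Hp Hq) as Hcost.
  destruct Hp as (Hp0 & Hp1 & _), Hq as (Hq0 & Hq1 & _).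
  split; [|split].
  - intros i Hi; specialize (Hp0 i Hi); specialize (Hq0 i Hi); unfold mix; nra.
  - replace 1 with ((1 - t) * 1 + t * 1) by ring; now apply is_series_mask_mix.
  - eexists; exact Hcost.
Qed.

Lemma cost_mix N c p q t : inP N c p -> inP N c q ->
  cost N c (mix t p q) = (1 - t) * cost N c p + t * cost N c q.
Proof. intros Hp Hq; apply is_series_unique, is_series_cost_mix; auto. Qed.

Lemma cost_ge N c p delta : 0 < delta -> (forall i, inN N i -> delta <= c i) ->
  inP N c p -> delta <= cost N c p.
Proof.
  intros Hdelta Hc (Hp0 & Hp1 & Hpc).
  assert (Hle : Series (fun i => delta * mask N p i) <= cost N c p).
  { apply Series_le; auto; intros i.
    destruct (inN_dec N i) as [Hi|Hi]; [rewrite !mask_in | rewrite !mask_out]; auto.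
    - specialize (Hp0 i Hi); specialize (Hc i Hi); split; nra.
    - lra. }
  rewrite Series_scal_l, (is_series_unique _ _ Hp1) in Hle; lra.
Qed.

Lemma exists_positive_inP N c delta k : inN N k -> 0 < delta ->
  (forall i, inN N i -> delta <= c i) ->
  exists q, inP N c q /\ forall i, inN N i -> 0 < q i.
Proof.
  intros Hk Hdelta Hc.
  (* Normalising 2^-i / c_i: as c_i >= delta, both q and q c are dominated by
     geometric series. *)
  set (g i := (/ 2) ^ i / c i).
  assert (Hg : forall i, inN N i -> 0 < g i).
  { intros i Hi; specialize (Hc i Hi); apply Rdiv_lt_0_compat; [apply pow_lt|]; lra. }
  assert (Hgeom : forall a, ex_series (fun i => (/ 2) ^ i * a)).
  { intros a; apply ex_series_scal_r; eexists; apply is_series_geom.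
    rewrite Rabs_pos_eq; lra. }
  assert (Hgex : ex_series (mask N g)).
  { apply (ex_series_nonneg_le _ (fun i => (/ 2) ^ i * / delta)); [intros i | apply Hgeom].
    split; [apply mask_nonneg; intros j Hj; now apply Rlt_le, Hg|].
    destruct (inN_dec N i) as [Hi|Hi]; [rewrite mask_in | rewrite mask_out]; auto.
    - apply Rmult_le_compat_l; [apply pow_le; lra|]. apply Rinv_le_contravar; auto.
    - apply Rmult_le_pos; [apply pow_le|apply Rlt_le, Rinv_0_lt_compat]; lra. }
  set (Z := Series (mask N g)).
  assert (HZ : is_series (mask N g) Z) by now apply Series_correct.
  assert (HZpos : 0 < Z).
  { assert (Hg0 : forall i, 0 <= mask N g i)
      by (intros i; apply mask_nonneg; intros j Hj; now apply Rlt_le, Hg).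
    pose proof (is_series_ge_term _ _ k Hg0 HZ) as Hgk.
    rewrite mask_in in Hgk by exact Hk; pose proof (Hg k Hk); lra. }
  exists (fun i => g i / Z); split; [split; [|split]|].
  - intros i Hi; apply Rlt_le, Rdiv_lt_0_compat; auto.
  - apply (is_series_ext (fun i => mask N g i * / Z)).
    { intros i; symmetry; apply mask_scal_r. }
    rewrite <- (Rinv_r Z) by lra; now apply is_series_scal_r.
  - apply (ex_series_nonneg_le _ (fun i => (/ 2) ^ i * / Z)); [intros i | apply Hgeom].
    destruct (inN_dec N i) as [Hi|Hi]; [rewrite mask_in | rewrite mask_out]; auto.
    + unfold g; replace ((/ 2) ^ i / c i / Z * c i) with ((/ 2) ^ i * / Z)
        by (specialize (Hc i Hi); field; lra).
      split; [|lra]. apply Rmult_le_pos; [apply pow_le|apply Rlt_le, Rinv_0_lt_compat]; lra.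
    + split; [lra|]. apply Rmult_le_pos; [apply pow_le|apply Rlt_le, Rinv_0_lt_compat]; lra.
  - intros i Hi; apply Rdiv_lt_0_compat; auto.
Qed.

Lemma neg_xlogx_mask_nonneg N c p i : inP N c p -> 0 <= mask N (fun j => - xlogx (p j)) i.
Proof.
  intros Hp; apply mask_nonneg; intros j Hj.
  pose proof (inP_le1 N c p j Hp Hj); destruct Hp as [Hp0 _]; specialize (Hp0 j Hj).
  pose proof (xlogx_nonpos (p j)); lra.
Qed.

Lemma entropy_ge0 N c p : inP N c p -> Rbar_le 0 (entropy N p).
Proof.
  intros Hp; rewrite <- (Lim_seq_const 0); apply Lim_seq_le_loc.
  exists 0%nat; intros m _; apply sum_n_nonneg; intros i.
  now apply (neg_xlogx_mask_nonneg N c).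
Qed.

Lemma entropy_mix_ge N c p q t k :
  inP N c p -> inP N c q -> (forall i, inN N i -> 0 < q i) -> 0 < t < 1 ->
  inN N k -> p k = 0 ->
  Rbar_le (Rbar_plus (Rbar_mult (1 - t) (entropy N p)) (t * q k * - ln (t * q k)))
          (entropy N (mix t p q)).
Proof.
  intros Hp Hq Hqpos Ht Hk Hpk.
  apply Lim_seq_sum_n_scal_plus_le with k.
  - intros i; now apply (neg_xlogx_mask_nonneg N c).
  - intros i; destruct (inN_dec N i) as [Hi|Hi];
      [rewrite !mask_in | rewrite !mask_out]; auto; [|lra].
    apply neg_xlogx_mix_ge; auto.
    + now apply Hp.
    + split; [now apply Hqpos | now apply (inP_le1 N c q)].
  - rewrite !mask_in by exact Hk; unfold mix; rewrite Hpk, xlogx_0.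
    replace ((1 - t) * 0 + t * q k) with (t * q k) by ring.
    rewrite xlogx_pos by (apply Rmult_lt_0_compat; [lra | now apply Hqpos]).
    lra.
Qed.

Lemma mixing_gain e C Cq a : 0 <= e -> 0 < C -> 0 < Cq -> 0 < a <= 1 ->
  exists t, 0 < t < 1 /\
    e / C < ((1 - t) * e + t * a * - ln (t * a)) / ((1 - t) * C + t * Cq).
Proof.
  intros He HC HCq Ha.
  (* With t = exp (-K) we get log (1 / (t a)) >= K, and K is chosen so that
     t a K exceeds the cost penalty t e Cq / C. *)
  set (K := e * Cq / (a * C) + 1).
  assert (HK : 1 <= K).
  { assert (0 <= e * Cq / (a * C))
      by (apply Rmult_le_pos; [nra | apply Rlt_le, Rinv_0_lt_compat; nra]).
    unfold K; lra. }
  exists (exp (- K)).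
  assert (Ht : 0 < exp (- K) < 1)
    by (split; [apply exp_pos | rewrite <- exp_0; apply exp_increasing; lra]).
  split; [exact Ht|].
  set (t := exp (- K)) in *.
  assert (Hln : K <= - ln (t * a)).
  { unfold t; rewrite ln_mult, ln_exp by (try apply exp_pos; lra).
    assert (ln a <= 0) by (rewrite <- ln_1; apply ln_le; lra).
    lra. }
  assert (HaK : a * K * C = e * Cq + a * C) by (unfold K; field; split; apply Rgt_not_eq; lra).
  assert (HD : 0 < (1 - t) * C + t * Cq) by nra.
  apply Rmult_lt_reg_r with (C * ((1 - t) * C + t * Cq)); [now apply Rmult_lt_0_compat|].
  field_simplify; [|lra|lra].
  assert (Hta : 0 < C * t * a) by (repeat apply Rmult_lt_0_compat; lra).
  assert (C * t * a * K <= C * t * a * - ln (t * a)) by (apply Rmult_le_compat_l; lra).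
  assert (C * t * a * K = t * (e * Cq) + t * (a * C))
    by (rewrite <- Rmult_plus_distr_l, <- HaK; ring).
  assert (0 < t * (a * C)) by (repeat apply Rmult_lt_0_compat; lra).
  lra.
Qed.

Lemma Rbar_mult_p_infty_pos (y : R) : 0 < y -> Rbar_mult p_infty y = p_infty.
Proof. intros Hy; apply is_Rbar_mult_unique, is_Rbar_mult_p_infty_pos; simpl; auto. Qed.

Lemma ratio_increases (E E' : Rbar) (C C' s A : R) :
  Rbar_le 0 E -> 0 < s -> 0 < C -> 0 < C' ->
  Rbar_le (Rbar_plus (Rbar_mult s E) A) E' ->
  real E / C < (s * real E + A) / C' ->
  Rbar_le (Rbar_mult E (/ C)) (Rbar_mult E' (/ C')) /\
  (Rbar_lt (Rbar_mult E (/ C)) p_infty ->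
   Rbar_lt (Rbar_mult E (/ C)) (Rbar_mult E' (/ C'))).
Proof.
  intros HE Hs HC HC' HE' Hgain.
  assert (HinvC' : 0 < / C') by now apply Rinv_0_lt_compat.
  destruct E as [e| |]; [| | contradiction].
  - assert (Hlt : Rbar_lt (Rbar_mult e (/ C)) (Rbar_mult E' (/ C'))).
    { destruct E' as [e'| |]; simpl in HE'; [| now rewrite Rbar_mult_p_infty_pos | contradiction].
      simpl; apply Rlt_le_trans with ((s * e + A) / C'); [exact Hgain|].
      now apply Rmult_le_compat_r; [apply Rlt_le|]. }
    split; [now apply Rbar_lt_le | auto].
  - rewrite Rbar_mult_comm, Rbar_mult_p_infty_pos in HE' by exact Hs.
    destruct E' as [e'| |]; simpl in HE'; try contradiction.
    rewrite !Rbar_mult_p_infty_pos by (try apply Rinv_0_lt_compat; auto).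
    split; [simpl; auto | intros []].
Qed.

Theorem lemma2p1 (N : option nat) (c p : nat -> R) :
  (match N with None => True | Some n => (2 <= n)%nat end) ->
  (exists delta : R, 0 < delta /\ forall i, inN N i -> delta <= c i) ->
  inP N c p ->
  (exists k, inN N k /\ p k = 0) ->
  exists p' : nat -> R,
    inP N c p' /\
    (forall i, inN N i -> 0 < p' i) /\
    Rbar_le (Hrate N c p) (Hrate N c p') /\
    (Rbar_lt (Hrate N c p) p_infty -> Rbar_lt (Hrate N c p) (Hrate N c p')).
Proof.
  intros _ (delta & Hdelta & Hc) Hp (k & Hk & Hpk).
  destruct (exists_positive_inP N c delta k Hk Hdelta Hc) as (q & Hq & Hqpos).
  pose proof (cost_ge N c p delta Hdelta Hc Hp) as HCp.
  pose proof (cost_ge N c q delta Hdelta Hc Hq) as HCq.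
  pose proof (entropy_ge0 N c p Hp) as HE.
  assert (Hqk : 0 < q k <= 1) by (split; [apply Hqpos | apply (inP_le1 N c q)]; auto).
  destruct (mixing_gain (real (entropy N p)) (cost N c p) (cost N c q) (q k))
    as (t & Ht & Hgain); try lra.
  { destruct (entropy N p); simpl in *; lra. }
  assert (Hmix : inP N c (mix t p q)) by (apply inP_mix; auto; lra).
  exists (mix t p q); split; [exact Hmix | split].
  - intros i Hi; pose proof (Hqpos i Hi); pose proof (proj1 Hp i Hi); unfold mix; nra.
  - apply (ratio_increases _ _ _ _ (1 - t) (t * q k * - ln (t * q k))).
    + exact HE.
    + lra.
    + lra.
    + pose proof (cost_ge N c (mix t p q) delta Hdelta Hc Hmix); lra.
    + now apply entropy_mix_ge with c.
    + now rewrite cost_mix.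
Qed.
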